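(* Under Assumptions A1–A4, the core Two-Tailed Averaging algorithm has infinitely many switch points: for every evaluation step $n$ there exists a switch point $n_s\ge n$.
   Context: Let $\Theta=\mathbb{R}^d$, let $(\theta_t)_{t\in\mathbb{N}_0}$ be a sequence in $\Theta$, let $f\colon\Theta\to\mathbb{R}$ be a loss function, and let $E\in\mathbb{N}$ be the evaluation period. Evaluation steps are the multiples of $E$. For integers $t\ge \Delta\ge 1$ write $\mathrm{avg}(t,\Delta)=\frac{1}{\Delta}\sum_{i=t+1-\Delta}^{t}\theta_i$; set $f(\mathrm{avg}(t,0))=+\infty$. Core Two-Tailed Averaging: it maintains integers $S,L$ and vectors $\theta^S,\theta^L$, initially $S=L=0$, $\theta^S=\theta^L=0$. For $t=1,2,\dots$: first $\theta_t$ is added to both averages, i.e. $\theta^S\leftarrow\theta^S+(\theta_t-\theta^S)/(S+1)$, $S\leftarrow S+1$, and $\theta^L\leftarrow\theta^L+(\theta_t-\theta^L)/(L+1)$, $L\leftarrow L+1$ (so $\theta^S=\mathrm{avg}(t,S)$, $\theta^L=\mathrm{avg}(t,L)$). Then, if $E$ divides $t$: if $f(\theta^S)\le f(\theta^L)$, a switch is performed: $L\leftarrow S$, $\theta^L\leftarrow\theta^S$, $S\leftarrow 0$. A time step $n$ is a switch point if a switch is performed at $t=n$. Optimal length: for $t\ge1$, $\mathcal{O}(t)$ is a (fixed) minimizer of $\Delta\mapsto f(\mathrm{avg}(t,\Delta))$ over $\Delta\in\{1,\dots,t\}$; $\mathcal{O}_E(n)=\lfloor \mathcal{O}(n)/E\rfloor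 E$ and $\mathcal{O}^E(n)=\lceil \mathcal{O}(n)/E\rceil E$. Assumptions (for all evaluation steps $n\ge E$): A1: $\Delta\mapsto f(\mathrm{avg}(n,\Delta))$ is strictly decreasing on $\Delta\in\{0,E,2E,\dots,\mathcal{O}_E(n)\}$. A2: for every integer $n_+$ with $\mathcal{O}^E(n)\le n_+\le n$, $f(\mathrm{avg}(n,\mathcal{O}^E(n)))\le f(\mathrm{avg}(n,n_+))$. A3: there exists a positive multiple $n_s$ of $E$ with $\mathcal{O}(n+n_s)-\mathcal{O}(n)<n_s$. A4: $\mathcal{O}(n)\le\mathcal{O}(n+E)$. *)

From HB Require Import structures.
From mathcomp Require Import all_boot all_order all_algebra.
From mathcomp Require Import reals constructive_ereal.
Set Implicit Arguments. Unset Strict Implicit. Unset Printing Implicit Defensive.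
Import Order.TTheory GRing.Theory Num.Theory.
Local Open Scope ring_scope.

Section TTA.
Variables (R : realType) (d : nat).
Notation Theta := 'rV[R]_d.

Definition avg (theta : nat -> Theta) (t D : nat) : Theta :=
  (D%:R)^-1 *: \sum_(t.+1 - D <= i < t.+1) theta i.

Definition favg (f : Theta -> R) (theta : nat -> Theta) (t D : nat) : \bar R :=
  if D == 0%N then +oo%E else (f (avg theta t D))%:E.

Record tta_state := TTAState {
  stS : nat; stL : nat; stThS : Theta; stThL : Theta }.

Definition tta_init : tta_state := TTAState 0 0 0 0.

Definition tta_add (x : Theta) (st : tta_state) : tta_state :=
  TTAState (stS st).+1 (stL st).+1
    (stThS st + ((stS st).+1%:R)^-1 *: (x - stThS st))
    (stThL st + ((stL st).+1%:R)^-1 *: (x - stThL st)).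

Definition tta_switches (E : nat) (f : Theta -> R) (t : nat) (st : tta_state) : bool :=
  (E %| t)%N && (f (stThS st) <= f (stThL st)).

Definition tta_step (E : nat) (f : Theta -> R) (theta : nat -> Theta)
    (t : nat) (st : tta_state) : tta_state :=
  let st' := tta_add (theta t) st in
  if tta_switches E f t st' then TTAState 0 (stS st') (stThS st') (stThS st')
  else st'.

Fixpoint tta_state_at (E : nat) (f : Theta -> R) (theta : nat -> Theta)
    (t : nat) : tta_state :=
  match t with
  | 0 => tta_init
  | t'.+1 => tta_step E f theta t'.+1 (tta_state_at E f theta t')
  end.

Definition switch_point (E : nat) (f : Theta -> R) (theta : nat -> Theta) (n : nat) : Prop :=
  (1 <= n)%N /\
  tta_switches E f n (tta_add (theta n) (tta_state_at E f theta n.-1)).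

Definition optimal_length (f : Theta -> R) (theta : nat -> Theta) (O : nat -> nat) : Prop :=
  forall t, (1 <= t)%N ->
    [/\ (1 <= O t <= t)%N &
        forall D, (1 <= D <= t)%N -> f (avg theta t (O t)) <= f (avg theta t D)].

Definition O_lo (E : nat) (O : nat -> nat) (n : nat) : nat := (O n %/ E * E)%N.
Definition O_up (E : nat) (O : nat -> nat) (n : nat) : nat := ((O n + E.-1) %/ E * E)%N.

End TTA.

(* The length S of the short average is a multiple of E at every evaluation
   step and, by A2, a switch is forced as soon as S reaches the rounded-up
   optimal length; together with A4 this keeps S below that rounded-up length
   forever.  Without further switches S would grow by E per evaluation
   period, i.e. as fast as time itself, whereas A3 makes the lag t - O(t)
   unbounded along evaluation steps, so S would eventually overtake O(t) + E. *)

From HB Require Import structures.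
From mathcomp Require Import all_boot all_order all_algebra.
From mathcomp Require Import reals constructive_ereal.
From mathcomp Require Import zify.
From Stdlib Require Import Classical.
Set Implicit Arguments.
Unset Strict Implicit.
Unset Printing Implicit Defensive.
Import Order.TTheory GRing.Theory Num.Theory.

Section RoundUp.
Variable E : nat.
Hypothesis E_gt0 : 0 < E.

Definition roundup x := ((x + E.-1) %/ E * E)%N.

Lemma dvdn_roundup x : E %| roundup x.
Proof. exact: dvdn_mull. Qed.

Lemma leq_roundup x : x <= roundup x.
Proof.
rewrite /roundup; have := divn_eq (x + E.-1) E.
have : (x + E.-1) %% E < E by rewrite ltn_pmod.
lia.
Qed.

Lemma roundup_ltn x : roundup x < x + E.
Proof. rewrite /roundup; have := divn_eq (x + E.-1) E; lia. Qed.

Lemma leq_roundup2 x y : x <= y -> roundup x <= roundup y.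
Proof. by move=> le_xy; rewrite leq_mul2r leq_div2r ?orbT // leq_add2r. Qed.

Lemma dvdn_ltn_addE a b : E %| a -> E %| b -> a < b -> a + E <= b.
Proof.
move=> /dvdnP [p ->] /dvdnP [q ->].
by rewrite ltn_pmul2r // -mulSnr leq_pmul2r.
Qed.

Lemma roundup_geq x : 0 < x -> E <= roundup x.
Proof. by move=> x_gt0; apply: dvdn_leq (dvdn_roundup x); have := leq_roundup x; lia. Qed.

End RoundUp.

Lemma optimal_length_range (R : realType) (d : nat) (f : 'rV[R]_d -> R)
    (theta : nat -> 'rV[R]_d) (O : nat -> nat) t :
  optimal_length f theta O -> 0 < t -> 0 < O t <= t.
Proof. by move=> hO /hO []. Qed.

Local Open Scope ring_scope.

Section RunningMean.
Variables (R : realType) (d : nat) (theta : nat -> 'rV[R]_d).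

Lemma avg0 t : avg theta t 0 = 0.
Proof. by rewrite /avg invr0 scale0r. Qed.

Lemma avg1 t : avg theta t.+1 1 = theta t.+1.
Proof. by rewrite /avg subSS subn0 big_nat1 invr1 scale1r. Qed.

Lemma scaler_avg t n : (n <= t.+1)%N ->
  n%:R *: avg theta t n = \sum_(t.+1 - n <= i < t.+1) theta i.
Proof.
case: n => [|n] le_nt; first by rewrite scale0r subn0 big_geq.
by rewrite /avg scalerA mulfV ?scale1r // pnatr_eq0.
Qed.

Lemma avgS t n : (n <= t)%N ->
  avg theta t.+1 n.+1 = avg theta t n + (n.+1%:R)^-1 *: (theta t.+1 - avg theta t n).
Proof.
move=> le_nt.
rewrite {1}/avg subSS big_nat_recr /= ?leq_subr // -scaler_avg ?leqW //.
have nS_neq0 : n.+1%:R != 0 :> R by rewrite pnatr_eq0.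
move: (avg theta t n) => a.
apply: (scalerI nS_neq0); rewrite !scalerDr !scalerA divff // !scale1r.
by rewrite mul1r !scaler_nat mulrSr -addrA [a + _]addrC subrK.
Qed.

End RunningMean.

Section Run.
Variables (R : realType) (d : nat) (theta : nat -> 'rV[R]_d).
Variables (E : nat) (f : 'rV[R]_d -> R).

Local Notation state_at := (tta_state_at E f theta).

(* Right after a switch theta^S still holds the old short average, which is
   harmless because it is overwritten by the next [tta_add]. *)
Definition tta_inv t (s : tta_state R d) :=
  [/\ (stS s <= stL s <= t)%N,
      stS s = 0%N \/ stThS s = avg theta t (stS s),
      stThL s = avg theta t (stL s) & (E %| t - stS s)%N].

Lemma tta_inv_add t s : tta_inv t s ->
  tta_inv t.+1 (tta_add (theta t.+1) s) /\
  stThS (tta_add (theta t.+1) s) = avg theta t.+1 (stS s).+1.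
Proof.
case=> /andP [le_SL le_Lt] thS thL dvd_tS /=.
have thS' : stThS s + ((stS s).+1%:R)^-1 *: (theta t.+1 - stThS s) =
            avg theta t.+1 (stS s).+1.
  case: thS => [->|->]; last by rewrite avgS // (leq_trans le_SL).
  by rewrite invr1 scale1r addrC subrK avg1.
split=> //; split=> /=; [by rewrite ltnS le_SL | by right | | by rewrite subSS].
by rewrite thL avgS.
Qed.

Lemma tta_inv_state_at t : tta_inv t (state_at t).
Proof.
elim: t => [|t IH]; first by split; rewrite /= ?avg0 //; left.
rewrite /= /tta_step; have [inv' thS] := tta_inv_add IH.
case: ifP => [/andP [dvd_Et _]|//]; case: inv' => /andP [le_SL le_Lt] _ _ _.
by split; rewrite /= ?subn0 //; [rewrite (leq_trans le_SL) | left].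
Qed.

Definition pre_state t := tta_add (theta t) (state_at t.-1).

Definition switch_at t := tta_switches E f t (pre_state t).

Lemma dvdn_switch_at t : switch_at t -> (E %| t)%N.
Proof. by case/andP. Qed.

Lemma stS_state_at t : (0 < t)%N ->
  stS (state_at t) = if switch_at t then 0%N else stS (pre_state t).
Proof. by case: t => // t _; rewrite /= /tta_step /switch_at /pre_state; case: ifP. Qed.

Lemma stS_pre_state_addE t : (0 < E)%N -> (E %| t)%N ->
  stS (pre_state (t + E)) = (stS (state_at t) + E)%N.
Proof.
move=> E_gt0 dvd_Et.
have between j : (j < E)%N -> stS (state_at (t + j)) = (stS (state_at t) + j)%N.
  elim: j => [|j IH] lt_jE; first by rewrite !addn0.
  rewrite addnS stS_state_at // ifN; first by rewrite /pre_state /= IH ?addnS // ltnW.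
  apply/negP => /dvdn_switch_at; rewrite -addnS dvdn_addr // => /(dvdn_leq (ltn0Sn j)); lia.
have -> : (t + E = (t + E.-1).+1)%N by lia.
by rewrite /= between ?ltn_predL // -addnS prednK.
Qed.

Lemma pre_state_at_eval t : (0 < t)%N -> (E %| t)%N ->
  let s := pre_state t in
  [/\ (E %| stS s)%N, (0 < stS s)%N, (stS s <= stL s <= t)%N,
      stThS s = avg theta t (stS s) & stThL s = avg theta t (stL s)].
Proof.
case: t => // t _ dvd_Et /=; rewrite /pre_state /=.
have [[le_SLt _ thL dvd_S] thS] := tta_inv_add (tta_inv_state_at t).
split => //; rewrite -(dvdn_subr _ dvd_Et) //.
by case/andP: le_SLt => /leq_trans; apply.
Qed.

End Run.

Section ForcedSwitches.
Variables (R : realType) (d : nat) (theta : nat -> 'rV[R]_d).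
Variables (f : 'rV[R]_d -> R) (E : nat) (O : nat -> nat).
Hypothesis E_gt0 : (0 < E)%N.
Hypothesis hO : optimal_length f theta O.
Hypothesis A2 : forall n, (E %| n)%N -> (E <= n)%N ->
  forall np, (O_up E O n <= np <= n)%N ->
    f (avg theta n (O_up E O n)) <= f (avg theta n np).
Hypothesis A4 : forall n, (E %| n)%N -> (E <= n)%N -> (O n <= O (n + E))%N.

Local Notation S t := (stS (pre_state theta E f t)).

Lemma switch_at_roundup t : (E <= t)%N -> (E %| t)%N ->
  S t = roundup E (O t) -> switch_at theta E f t.
Proof.
move=> le_Et dvd_Et S_eq.
have [_ _ /andP [le_SL le_Lt] thS thL] := pre_state_at_eval theta f (leq_trans E_gt0 le_Et) dvd_Et.
rewrite /switch_at /tta_switches dvd_Et thS thL S_eq.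
by apply: A2; rewrite // -[O_up E O t]/(roundup E (O t)) -S_eq le_SL.
Qed.

Lemma short_leq_roundup t : (E <= t)%N -> (E %| t)%N -> (S t <= roundup E (O t))%N.
Proof.
move=> le_Et /dvdnP [k def_t]; subst t.
case: k le_Et => [|k _]; first by rewrite mul0n; lia.
have O_gt0 u : (0 < u)%N -> (0 < O u)%N by case/(optimal_length_range hO)/andP.
elim: k => [|k IH].
  have := stS_pre_state_addE theta f E_gt0 (dvdn0 E); rewrite add0n mul1n => ->.
  exact/roundup_geq/O_gt0.
set t := (k.+1 * E)%N in IH *; rewrite mulSnr -/t.
have le_Et : (E <= t)%N by rewrite leq_pmull.
have dvd_Et : (E %| t)%N by rewrite dvdn_mull.
rewrite stS_pre_state_addE // stS_state_at ?(leq_trans E_gt0) //.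
case: ifP => [_|no_sw]; first by rewrite add0n roundup_geq ?O_gt0 ?addn_gt0 ?E_gt0 ?orbT.
have lt_S : (S t < roundup E (O t))%N.
  by rewrite ltn_neqAle IH andbT; apply: contraFN no_sw => /eqP; apply: switch_at_roundup.
have [dvd_S _ _ _ _] := pre_state_at_eval theta f (leq_trans E_gt0 le_Et) dvd_Et.
apply: leq_trans (dvdn_ltn_addE E_gt0 dvd_S (dvdn_roundup E _) lt_S) _.
exact/leq_roundup2/A4.
Qed.

Lemma short_addE t k : (0 < t)%N -> (E %| t)%N ->
  (forall i, (i < k)%N -> ~~ switch_at theta E f (t + i * E)) ->
  S (t + k * E) = (S t + k * E)%N.
Proof.
move=> t_gt0 dvd_Et; elim: k => [|k IH] no_sw; first by rewrite !addn0.
rewrite mulSnr addnA stS_pre_state_addE ?dvdn_add ?dvdn_mull //.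
rewrite stS_state_at ?addn_gt0 ?t_gt0 // ifN ?no_sw // IH ?addnA // => i lt_ik.
by rewrite no_sw // ltnS ltnW.
Qed.

End ForcedSwitches.

Lemma unbounded_lag (R : realType) (d : nat) (theta : nat -> 'rV[R]_d)
    (f : 'rV[R]_d -> R) (E : nat) (O : nat -> nat) :
  optimal_length f theta O ->
  (forall n, (E %| n)%N -> (E <= n)%N ->
     exists ns, [/\ (0 < ns)%N, (E %| ns)%N & (O (n + ns) < O n + ns)%N]) ->
  forall t m, (0 < t)%N -> (E <= t)%N -> (E %| t)%N ->
  exists u, [/\ (E %| u)%N, (t <= u)%N & (m + O u <= u)%N].
Proof.
move=> hO A3 t m t_gt0 le_Et dvd_Et; elim: m => [|m [u [dvd_Eu le_tu lag_u]]].
  by exists t; case/andP: (optimal_length_range hO t_gt0).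
have [ns [ns_gt0 dvd_Ens lt_O]] := A3 u dvd_Eu (leq_trans le_Et le_tu).
by exists (u + ns)%N; split; [exact: dvdn_add | lia | lia].
Qed.

Theorem mainTheorem3 (R : realType) (d : nat) (theta : nat -> 'rV[R]_d)
  (f : 'rV[R]_d -> R) (E : nat) (O : nat -> nat)
  (hE : (0 < E)%N)
  (hO : optimal_length f theta O)
  (A1 : forall n, (E %| n)%N -> (E <= n)%N ->
     forall i j, (i < j)%N -> (j * E <= O_lo E O n)%N ->
       (favg f theta n (j * E) < favg f theta n (i * E))%E)
  (A2 : forall n, (E %| n)%N -> (E <= n)%N ->
     forall np, (O_up E O n <= np <= n)%N ->
       f (avg theta n (O_up E O n)) <= f (avg theta n np))
  (A3 : forall n, (E %| n)%N -> (E <= n)%N ->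
     exists ns, [/\ (0 < ns)%N, (E %| ns)%N & (O (n + ns) < O n + ns)%N])
  (A4 : forall n, (E %| n)%N -> (E <= n)%N -> (O n <= O (n + E))%N) :
  forall n, (E %| n)%N -> exists ns, (n <= ns)%N /\ switch_point E f theta ns.
Proof.
move=> n dvd_En; apply: NNPP => no_switch.
have t0_gt0 : (0 < n + E)%N by rewrite addn_gt0 hE orbT.
have dvd_Et0 : (E %| n + E)%N by rewrite dvdn_add.
have [u [dvd_Eu le_t0u lag_u]] :=
  unbounded_lag hO A3 (E + (n + E)) t0_gt0 (leq_addl n E) dvd_Et0.
pose k := ((u - (n + E)) %/ E)%N.
have def_u : (n + E + k * E)%N = u by rewrite divnK ?dvdn_sub // subnKC.
have S_u : stS (pre_state theta E f u) = (stS (pre_state theta E f (n + E)) + k * E)%N.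
  rewrite -def_u; apply: short_addE => // i _; apply/negP => sw; apply: no_switch.
  by exists (n + E + i * E)%N; split; [lia | split; [lia | ]].
have := short_leq_roundup hE hO A2 A4 (leq_trans (leq_addl n E) le_t0u) dvd_Eu.
have := roundup_ltn hE (O u); lia.
Qed.
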